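(* Let $I\subset\mathbb{R}$ be an open interval, let $\bm{a}:I\to\mathbb{R}^2_1$ be a timelike frontal with Gauss mapping $\bm{\nu}:I\to S^1_1$, and let $r:I\to\mathbb{R}^+$ be a positive constant function. If $\bm{a}$ is not constant (i.e. its image is not a single point), then the pseudo-circle family $C_{(\bm{a}(t),-r(t))}$ does not create an envelope.
   Context: All objects are $C^\infty$. The Minkowski plane $\mathbb{R}^2_1$ is $\mathbb{R}^2$ with $\langle\bm{x},\bm{y}\rangle=-x_1y_1+x_2y_2$; $S^1_1=\{\bm{x}:\langle\bm{x},\bm{x}\rangle=1\}$. A smooth $\bm{a}:I\to\mathbb{R}^2_1$ is a timelike frontal if there is a smooth $\bm{\nu}:I\to S^1_1$ (Gauss mapping) with $\langle\frac{d\bm{a}}{dt}(t),\bm{\nu}(t)\rangle=0$ for all $t$. $C_{(\bm{a}(t),-r(t))}=\{\bm{x}\in\mathbb{R}^2_1:\langle\bm{x}-\bm{a}(t),\bm{x}-\bm{a}(t)\rangle=-r(t)^2\}$. An envelope of $C_{(\bm{a}(t),-r(t))}$ is a smooth $f:I\to\mathbb{R}^2_1$ with $f(t)\in C_{(\bm{a}(t),-r(t))}$ and $\langle\frac{df}{dt}(t),f(t)-\bm{a}(t)\rangle=0$ for all $t\in I$. *)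

From Stdlib Require Import Reals.
From Coquelicot Require Import Coquelicot.
Open Scope R_scope.

Definition mink (x y : R * R) : R := - fst x * fst y + snd x * snd y.

Definition vsub (x y : R * R) : R * R := (fst x - fst y, snd x - snd y).

Definition in_I (lo hi : Rbar) (t : R) : Prop := Rbar_lt lo t /\ Rbar_lt t hi.

Definition smooth_on (lo hi : Rbar) (f : R -> R) : Prop :=
  forall (n : nat) (t : R), in_I lo hi t -> ex_derive_n f n t.

Definition smooth_curve (lo hi : Rbar) (g : R -> R * R) : Prop :=
  smooth_on lo hi (fun s => fst (g s)) /\ smooth_on lo hi (fun s => snd (g s)).

Definition dcurve (g : R -> R * R) (t : R) : R * R :=
  (Derive (fun s => fst (g s)) t, Derive (fun s => snd (g s)) t).

Definition gauss_mapping (lo hi : Rbar) (a nu : R -> R * R) : Prop :=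
  smooth_curve lo hi nu /\
  forall t, in_I lo hi t -> mink (nu t) (nu t) = 1 /\ mink (dcurve a t) (nu t) = 0.

Definition timelike_frontal_with (lo hi : Rbar) (a nu : R -> R * R) : Prop :=
  smooth_curve lo hi a /\ gauss_mapping lo hi a nu.

Definition in_pseudo_circle (c : R * R) (rho : R) (x : R * R) : Prop :=
  mink (vsub x c) (vsub x c) = - rho ^ 2.

Definition is_envelope (lo hi : Rbar) (a : R -> R * R) (r : R -> R) (f : R -> R * R) : Prop :=
  smooth_curve lo hi f /\
  forall t, in_I lo hi t ->
    in_pseudo_circle (a t) (r t) (f t) /\ mink (dcurve f t) (vsub (f t) (a t)) = 0.

Definition creates_envelope (lo hi : Rbar) (a : R -> R * R) (r : R -> R) : Prop :=
  exists f : R -> R * R, is_envelope lo hi a r f.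

(* The squared Minkowski distance from the envelope point f(t) to the centre a(t) is the
   constant -r^2, so differentiating it and subtracting the envelope condition gives
   <a', f - a> = 0.  Thus a' is orthogonal both to the timelike vector f - a and to the
   spacelike vector nu; these span the Minkowski plane, so a' = 0 and a is constant. *)
From Stdlib Require Import Reals Lra Psatz.
From Coquelicot Require Import Coquelicot.
Open Scope R_scope.

Lemma mink_vsubl (x y z : R * R) : mink (vsub x y) z = mink x z - mink y z.
Proof. unfold mink, vsub; simpl; ring. Qed.

Lemma mink_lagrange (x y : R * R) :
  (fst x * snd y - snd x * fst y) ^ 2 = mink x y ^ 2 - mink x x * mink y y.
Proof. unfold mink; ring. Qed.

Lemma mink_orthogonal_spacelike_timelike (v n g : R * R) :
  0 < mink n n -> mink g g < 0 -> mink v n = 0 -> mink v g = 0 -> v = (0, 0).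
Proof.
  destruct v as [v1 v2], n as [n1 n2], g as [g1 g2].
  intros Hn Hg Hvn Hvg.
  set (det := n1 * g2 - n2 * g1).
  assert (Hdet : det <> 0).
  { intro E.
    pose proof (mink_lagrange (n1, n2) (g1, g2)) as L; simpl in L; fold det in L.
    rewrite E in L; nra. }
  unfold mink in Hvn, Hvg; simpl in Hvn, Hvg.
  assert (H1 : v1 * det = 0).
  { replace (v1 * det) with (- g2 * (- v1 * n1 + v2 * n2) + n2 * (- v1 * g1 + v2 * g2))
      by (unfold det; ring).
    rewrite Hvn, Hvg; ring. }
  assert (H2 : v2 * det = 0).
  { replace (v2 * det) with (- g1 * (- v1 * n1 + v2 * n2) + n1 * (- v1 * g1 + v2 * g2))
      by (unfold det; ring).
    rewrite Hvn, Hvg; ring. }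
  apply Rmult_integral in H1, H2.
  destruct H1 as [-> | ]; [| contradiction].
  destruct H2 as [-> | ]; [reflexivity | contradiction].
Qed.

Lemma dcurve_vsub (f g : R -> R * R) (t : R) :
  ex_derive (fun s => fst (f s)) t -> ex_derive (fun s => snd (f s)) t ->
  ex_derive (fun s => fst (g s)) t -> ex_derive (fun s => snd (g s)) t ->
  dcurve (fun s => vsub (f s) (g s)) t = vsub (dcurve f t) (dcurve g t).
Proof.
  intros Hf1 Hf2 Hg1 Hg2; unfold dcurve, vsub; simpl.
  now rewrite !Derive_minus.
Qed.

Lemma is_derive_mink_sq (g : R -> R * R) (t : R) :
  ex_derive (fun s => fst (g s)) t -> ex_derive (fun s => snd (g s)) t ->
  is_derive (fun s => mink (g s) (g s)) t (2 * mink (dcurve g t) (g t)).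
Proof.
  unfold mink, dcurve; simpl.
  (* auto_derive only treats variables as unknown differentiable functions. *)
  set (x := fun s => fst (g s)); set (y := fun s => snd (g s)).
  change (fst (g t)) with (x t); change (snd (g t)) with (y t).
  change (fun s => - fst (g s) * fst (g s) + snd (g s) * snd (g s))
    with (fun s => - x s * x s + y s * y s).
  clearbody x y; intros Hx Hy.
  auto_derive; [tauto |].
  change (fun s => x s) with x; change (fun s => y s) with y; ring.
Qed.

Section OnInterval.

Variables lo hi : Rbar.

Lemma in_I_convex (t1 t2 t : R) :
  in_I lo hi t1 -> in_I lo hi t2 -> t1 <= t <= t2 -> in_I lo hi t.
Proof.
  intros [A B] [C D] [E F]; split.
  - destruct lo; simpl in *; auto; lra.
  - destruct hi; simpl in *; auto; lra.
Qed.

Lemma in_I_locally (t : R) : in_I lo hi t -> locally t (in_I lo hi).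
Proof.
  apply (open_and (fun u : R => Rbar_lt lo u) (fun u : R => Rbar_lt u hi)).
  - apply open_Rbar_gt.
  - apply open_Rbar_lt.
Qed.

Lemma smooth_curve_ex_derive (g : R -> R * R) (t : R) :
  smooth_curve lo hi g -> in_I lo hi t ->
  ex_derive (fun s => fst (g s)) t /\ ex_derive (fun s => snd (g s)) t.
Proof. intros [H1 H2] It; exact (conj (H1 1%nat t It) (H2 1%nat t It)). Qed.

Lemma Derive_eq0_of_const_on (h : R -> R) (c t : R) :
  (forall s, in_I lo hi s -> h s = c) -> in_I lo hi t -> Derive h t = 0.
Proof.
  intros Hh It.
  rewrite (Derive_ext_loc _ (fun _ => c)); [apply Derive_const |].
  exact (filter_imp _ _ Hh (in_I_locally t It)).
Qed.

Lemma const_on_of_Derive_eq0 (h : R -> R) (u v : R) :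
  (forall t, in_I lo hi t -> ex_derive h t /\ Derive h t = 0) ->
  in_I lo hi u -> in_I lo hi v -> h u = h v.
Proof.
  intros Hh.
  assert (Hlt : forall u v, u < v -> in_I lo hi u -> in_I lo hi v -> h u = h v).
  { intros u' v' Huv Iu Iv; apply (eq_is_derive h u' v'); [| exact Huv].
    intros t Ht; destruct (Hh t (in_I_convex u' v' t Iu Iv Ht)) as [E D].
    pose proof (Derive_correct _ _ E) as C; rewrite D in C; exact C. }
  intros Iu Iv; destruct (Rtotal_order u v) as [L | [-> | L]].
  - exact (Hlt u v L Iu Iv).
  - reflexivity.
  - symmetry; exact (Hlt v u L Iv Iu).
Qed.

Lemma curve_const_on_of_dcurve_eq0 (g : R -> R * R) (u v : R) :
  smooth_curve lo hi g -> (forall t, in_I lo hi t -> dcurve g t = (0, 0)) ->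
  in_I lo hi u -> in_I lo hi v -> g u = g v.
Proof.
  intros Hg H0 Iu Iv.
  rewrite (surjective_pairing (g u)), (surjective_pairing (g v)).
  f_equal; [apply (const_on_of_Derive_eq0 (fun s => fst (g s)))
           | apply (const_on_of_Derive_eq0 (fun s => snd (g s)))]; auto;
    intros t It; destruct (smooth_curve_ex_derive g t Hg It) as [E1 E2];
    pose proof (H0 t It) as D; unfold dcurve in D; injection D; auto.
Qed.

Lemma envelope_velocity_orthogonal (a f : R -> R * R) (r : R -> R) (c t : R) :
  smooth_curve lo hi a -> is_envelope lo hi a r f ->
  (forall s, in_I lo hi s -> r s = c) -> in_I lo hi t ->
  mink (dcurve a t) (vsub (f t) (a t)) = 0.
Proof.
  intros Ha [Hf Henv] Hr It.
  destruct (smooth_curve_ex_derive a t Ha It) as [Ea1 Ea2].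
  destruct (smooth_curve_ex_derive f t Hf It) as [Ef1 Ef2].
  set (d := fun s => vsub (f s) (a s)).
  assert (Ed : ex_derive (fun s => fst (d s)) t /\ ex_derive (fun s => snd (d s)) t).
  { unfold d, vsub; simpl; split.
    - exact (ex_derive_minus (fun s => fst (f s)) (fun s => fst (a s)) t Ef1 Ea1).
    - exact (ex_derive_minus (fun s => snd (f s)) (fun s => snd (a s)) t Ef2 Ea2). }
  assert (Hconst : Derive (fun s => mink (d s) (d s)) t = 0).
  { apply (Derive_eq0_of_const_on _ (- c ^ 2)); [| exact It].
    intros s Is; destruct (Henv s Is) as [P _]; rewrite <- (Hr s Is); exact P. }
  pose proof (eq_trans (eq_sym (is_derive_unique _ _ _
    (is_derive_mink_sq d t (proj1 Ed) (proj2 Ed)))) Hconst) as Hd.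
  unfold d in Hd; rewrite dcurve_vsub, mink_vsubl in Hd by assumption.
  destruct (Henv t It) as [_ Q]; lra.
Qed.

Lemma frontal_envelope_dcurve_eq0 (a nu f : R -> R * R) (r : R -> R) (c t : R) :
  timelike_frontal_with lo hi a nu -> 0 < c -> (forall s, in_I lo hi s -> r s = c) ->
  is_envelope lo hi a r f -> in_I lo hi t -> dcurve a t = (0, 0).
Proof.
  intros [Ha [_ Hnu]] Hc Hr Hf It.
  destruct (Hnu t It) as [Hnn Hanu].
  destruct (proj2 Hf t It) as [P _].
  apply (mink_orthogonal_spacelike_timelike _ (nu t) (vsub (f t) (a t))).
  - lra.
  - unfold in_pseudo_circle in P; rewrite P, (Hr t It); nra.
  - exact Hanu.
  - exact (envelope_velocity_orthogonal a f r c t Ha Hf Hr It).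
Qed.

End OnInterval.

Theorem proposition2 (lo hi : Rbar) (a nu : R -> R * R) (r : R -> R) :
  timelike_frontal_with lo hi a nu ->
  (exists c : R, 0 < c /\ forall t, in_I lo hi t -> r t = c) ->
  (exists t1 t2 : R, in_I lo hi t1 /\ in_I lo hi t2 /\ a t1 <> a t2) ->
  ~ creates_envelope lo hi a r.
Proof.
  intros Hfr [c [Hc Hr]] [t1 [t2 [I1 [I2 Hne]]]] [f Hf].
  apply Hne, (curve_const_on_of_dcurve_eq0 lo hi a); auto.
  - exact (proj1 Hfr).
  - intros t It; exact (frontal_envelope_dcurve_eq0 lo hi a nu f r c t Hfr Hc Hr Hf It).
Qed.
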